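(* Let $\mathcal{R}^*=\{z\in\mathbb{C}: z\ne n\pi i,\ n\in\mathbb{Z}\}$. There exist real-valued functions $C_1(x,y,t),C_2(t),C_3(t)\ge0$ ($x,y\in\mathbb{R}$, $t\in\mathcal{R}^*$), bounded on compact subsets of $\mathcal{R}^*$, such that for every $\lambda\in\mathbb{Z}_{\ge1}$ and $t\in\mathcal{R}^*$, \[ |\theta_\lambda(x,y,\boldsymbol\mu_\lambda,t)|\le\Big|\frac{\sqrt2 g}{1-e^{-2t}}\Big|C_1(x,y,t),\quad |\psi^\pm_\lambda(\boldsymbol\mu_\lambda,t)|\le\Big|\frac{2g^2}{1-e^{-2t}}\Big|C_2(t),\quad |\xi_\lambda(\boldsymbol\mu_\lambda,t)|\le\Big|\frac{2g^2}{1-e^{-2t}}\Big|C_3(t)\,\lambda, \] uniformly for $0\le\mu_1\le\mu_2\le\cdots\le\mu_\lambda\le1$.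
   Context: $g\in\mathbb{R}$ is fixed. For $\boldsymbol\mu_\lambda=(\mu_1,\dots,\mu_\lambda)$ and with the convention $\mu_0=0$: \[ \theta_\lambda(x,y,\boldsymbol\mu_\lambda,t)=\frac{2\sqrt2 g}{\sinh t}(x\cosh t-y)\frac{1-(-1)^\lambda}2-\sqrt2 g(x-y)\coth(\tfrac t2)+\frac{2\sqrt2 g(-1)^\lambda}{\sinh t}\sum_{\gamma=0}^\lambda(-1)^\gamma\big[x\cosh(t(1-\mu_\gamma))-y\cosh(t\mu_\gamma)\big], \] \[ \xi_\lambda(\boldsymbol\mu_\lambda,t)=-\frac{8g^2}{\sinh t}\sinh^2\!\big(\tfrac12t(1-\mu_\lambda)\big)(-1)^\lambda\sum_{\gamma=0}^\lambda(-1)^\gamma\cosh(t\mu_\gamma)-\frac{4g^2}{\sinh t}\sum_{\substack{0\le\alpha<\beta\le\lambda-1\\\beta-\alpha\ \mathrm{odd}}}\big(\cosh(t(\mu_{\beta+1}-1))-\cosh(t(\mu_\beta-1))\big)\big(\cosh(t\mu_\alpha)-\cosh(t\mu_{\alpha+1})\big), \] \[ \psi^-_\lambda(\boldsymbol\mu_\lambda,t)=\frac{4g^2}{\sinh t}\Big[\sum_{\gamma=0}^\lambda(-1)^\gamma\sinh\big(t(\tfrac12-\mu_\gamma)\big)\Big]^2,\qquad \psi^+_\lambda(\boldsymbol\mu_\lambda,t)=\frac{4g^2}{\sinh t}\Big[\sum_{\gamma=0}^\lambda(-1)^\gamma\cosh\big(t(\tfrac12-\mu_\gamma)\big)\Big]^2.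 \] *)

From Stdlib Require Import Reals List.
From Coquelicot Require Import Coquelicot.
Open Scope R_scope.

Definition cexp (z : C) : C :=
  (exp (Re z) * cos (Im z), exp (Re z) * sin (Im z)).
Definition csinh (z : C) : C := ((cexp z - cexp (- z)) / RtoC 2)%C.
Definition ccosh (z : C) : C := ((cexp z + cexp (- z)) / RtoC 2)%C.
Definition ccoth (z : C) : C := (ccosh z / csinh z)%C.

Definition Rstar (z : C) : Prop := forall n : Z, z <> (0, IZR n * PI).

Definition compactC (K : C -> Prop) : Prop :=
  forall (I : Type) (U : I -> C -> Prop),
    (forall i, open (U i)) ->
    (forall z, K z -> exists i, U i z) ->
    exists l : list I, forall z, K z -> exists i, In i l /\ U i z.

Definition muz (mu : nat -> R) (g : nat) : R :=
  match g with O => 0 | S _ => mu g end.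

Definition sgn (k : nat) : C := RtoC ((-1) ^ k).

Definition theta (g : R) (lam : nat) (x y : R) (mu : nat -> R) (t : C) : C :=
  (RtoC (2 * sqrt 2 * g) / csinh t * (RtoC x * ccosh t - RtoC y)
     * RtoC ((1 - (-1) ^ lam) / 2)
   - RtoC (sqrt 2 * g * (x - y)) * ccoth (t / RtoC 2)
   + RtoC (2 * sqrt 2 * g) * sgn lam / csinh t
     * sum_n (fun k => sgn k *
          (RtoC x * ccosh (t * RtoC (1 - muz mu k))
           - RtoC y * ccosh (t * RtoC (muz mu k)))) lam)%C.

Definition xi (g : R) (lam : nat) (mu : nat -> R) (t : C) : C :=
  (- (RtoC (8 * g ^ 2) / csinh t)
     * csinh (RtoC (1/2) * t * RtoC (1 - muz mu lam)) * csinh (RtoC (1/2) * t * RtoC (1 - muz mu lam)) * sgn lam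
     * sum_n (fun k => sgn k * ccosh (t * RtoC (muz mu k))) lam
   - RtoC (4 * g ^ 2) / csinh t
     * sum_n (fun b => sum_n (fun a =>
          if (Nat.ltb a b && Nat.odd (b - a))%bool then
            (ccosh (t * RtoC (muz mu (S b) - 1)) - ccosh (t * RtoC (muz mu b - 1)))
            * (ccosh (t * RtoC (muz mu a)) - ccosh (t * RtoC (muz mu (S a))))
          else RtoC 0) (lam - 1)) (lam - 1))%C.

Definition psi_minus (g : R) (lam : nat) (mu : nat -> R) (t : C) : C :=
  (RtoC (4 * g ^ 2) / csinh t
   * (sum_n (fun k => sgn k * csinh (t * RtoC (1/2 - muz mu k))) lam)
   * (sum_n (fun k => sgn k * csinh (t * RtoC (1/2 - muz mu k))) lam))%C.

Definition psi_plus (g : R) (lam : nat) (mu : nat -> R) (t : C) : C :=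
  (RtoC (4 * g ^ 2) / csinh t
   * (sum_n (fun k => sgn k * ccosh (t * RtoC (1/2 - muz mu k))) lam)
   * (sum_n (fun k => sgn k * ccosh (t * RtoC (1/2 - muz mu k))) lam))%C.

Definition admissible (lam : nat) (mu : nat -> R) : Prop :=
  (forall k, (1 <= k <= lam)%nat -> 0 <= mu k <= 1) /\
  (forall k, (1 <= k < lam)%nat -> mu k <= mu (S k)).

From Stdlib Require Import Reals List Lra Lia Psatz.
From Coquelicot Require Import Coquelicot.
Open Scope R_scope.

(* With e = e^(-t) one has 1/sinh t = 2e / (1 - e^(-2t)) and
   coth(t/2) = 2 e^(-t/2) (1 + e) cosh(t/2) / (1 - e^(-2t)); on R* the denominator
   1 - e^(-2t) does not vanish, so theta, psi^+-, xi are the announced prefactors times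
   polynomials in e, e^(-t/2), cosh t, cosh(t/2) and the sums over gamma.  Every
   hyperbolic function occurring there has the form f(t s) with |s| <= 1, hence is bounded
   by L(t) = 2 (1 + |Re t| + |Im t|) e^|Re t| and L(t)-Lipschitz in s.  For monotone
   mu in [0,1], grouping the alternating sums in consecutive pairs bounds them by 2 L(t)
   independently of lambda, while the double sum in xi telescopes in beta, which produces
   the single factor lambda.  Finally L is bounded on bounded, hence on compact, sets. *)

Lemma exp_le_exp x y : x <= y -> exp x <= exp y.
Proof. intros [Hlt | ->]; [left; apply exp_increasing, Hlt | right; reflexivity]. Qed.

Lemma derivative_bound_lipschitz (h h' : R -> R) a b K u v :
  a <= u <= b -> a <= v <= b ->
  (forall c, a <= c <= b -> derivable_pt_lim h c (h' c)) ->
  (forall c, a <= c <= b -> Rabs (h' c) <= K) ->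
  Rabs (h u - h v) <= K * Rabs (u - v).
Proof.
  intros Hu Hv Hder Hbound.
  assert (Hint : forall c, Rmin v u <= c <= Rmax v u -> a <= c <= b).
  { intros c [Hc1 Hc2]. split.
    - apply Rle_trans with (Rmin v u); [apply Rmin_glb; lra | exact Hc1].
    - apply Rle_trans with (Rmax v u); [exact Hc2 | apply Rmax_lub; lra]. }
  destruct (MVT_abs h h' v u (fun c Hc => Hder c (Hint c Hc))) as [c [Hmvt Hc]].
  rewrite Hmvt. apply Rmult_le_compat_r; [apply Rabs_pos | exact (Hbound c (Hint c Hc))].
Qed.

Lemma Rabs_lincomb_le p q u v :
  Rabs u <= 1 -> Rabs v <= 1 -> Rabs (p * u + q * v) <= Rabs p + Rabs q.
Proof.
  intros Hu Hv. eapply Rle_trans; [apply Rabs_triang |]. rewrite !Rabs_mult.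
  pose proof (Rabs_pos p). pose proof (Rabs_pos q). nra.
Qed.

Lemma Cmod_le_Rabs_fst_snd z : Cmod z <= Rabs (fst z) + Rabs (snd z).
Proof.
  destruct z as [x y].
  replace (Cmod (x, y)) with (Cmod (RtoC x + Ci * RtoC y))
    by (f_equal; apply injective_projections; simpl; ring).
  eapply Rle_trans; [apply Cmod_triangle |].
  rewrite Cmod_mult, Cmod_Ci, !Cmod_R. simpl. lra.
Qed.

Lemma Cmod_sub_le (a b : C) : Cmod (a - b) <= Cmod a + Cmod b.
Proof. unfold Cminus. rewrite <- (Cmod_opp b). apply Cmod_triangle. Qed.

Lemma cexp_plus (z w : C) : cexp (z + w)%C = (cexp z * cexp w)%C.
Proof.
  destruct z as [a b], w as [c d]. unfold cexp, Re, Im; simpl.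
  rewrite exp_plus, cos_plus, sin_plus. apply injective_projections; simpl; ring.
Qed.

Lemma Cmod_cexp z : Cmod (cexp z) = exp (fst z).
Proof.
  destruct z as [a b]. unfold Cmod, cexp, Re, Im; simpl.
  replace ((exp a * cos b) * ((exp a * cos b) * 1) + (exp a * sin b) * ((exp a * sin b) * 1))
    with (Rsqr (exp a)) by (pose proof (sin2_cos2 b); unfold Rsqr in *; nra).
  apply sqrt_Rsqr. left; apply exp_pos.
Qed.

Lemma cexp_neq0 z : cexp z <> 0%C.
Proof.
  intro H. pose proof (exp_pos (fst z)). rewrite <- Cmod_cexp, H, Cmod_0 in H0. lra.
Qed.

Lemma cexp_opp z : cexp (- z) = (/ cexp z)%C.
Proof.
  assert (H : (cexp z * cexp (- z))%C = 1%C).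
  { rewrite <- cexp_plus. rewrite Cplus_opp_r.
    unfold cexp, Re, Im; simpl. rewrite exp_0, cos_0, sin_0.
    apply injective_projections; simpl; ring. }
  pose proof (cexp_neq0 z) as Hnz.
  replace (cexp (- z)) with (cexp z * cexp (- z) * / cexp z)%C by (field; exact Hnz).
  rewrite H. ring.
Qed.

Lemma Cmod_cexp_le z A : Rabs (fst z) <= A -> Cmod (cexp z) <= exp A.
Proof.
  intro H. rewrite Cmod_cexp. apply exp_le_exp. pose proof (Rle_abs (fst z)). lra.
Qed.

Lemma Cmod_ccosh_le z A : Rabs (fst z) <= A -> Cmod (ccosh z) <= exp A.
Proof.
  intro H. assert (H' : Rabs (fst (- z)%C) <= A) by (simpl; rewrite Rabs_Ropp; exact H).
  unfold ccosh. rewrite Cmod_div, Cmod_R, Rabs_pos_eq by (lra || (intro E; injection E; lra)).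
  pose proof (Cmod_triangle (cexp z) (cexp (- z))).
  pose proof (Cmod_cexp_le _ _ H). pose proof (Cmod_cexp_le _ _ H'). lra.
Qed.

Lemma Cmod_csinh_le z A : Rabs (fst z) <= A -> Cmod (csinh z) <= exp A.
Proof.
  intro H. assert (H' : Rabs (fst (- z)%C) <= A) by (simpl; rewrite Rabs_Ropp; exact H).
  unfold csinh. rewrite Cmod_div, Cmod_R, Rabs_pos_eq by (lra || (intro E; injection E; lra)).
  pose proof (Cmod_sub_le (cexp z) (cexp (- z))).
  pose proof (Cmod_cexp_le _ _ H). pose proof (Cmod_cexp_le _ _ H'). lra.
Qed.

Definition scale (t : C) : R := 2 * (1 + Rabs (fst t) + Rabs (snd t)) * exp (Rabs (fst t)).

Lemma scale_ge t : 2 <= scale t /\ exp (Rabs (fst t)) <= scale t.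
Proof.
  unfold scale. pose proof (Rabs_pos (fst t)). pose proof (Rabs_pos (snd t)).
  pose proof (exp_ineq1_le (Rabs (fst t))). split; nra.
Qed.

Lemma Rabs_fst_mul_RtoC t s : -1 <= s <= 1 -> Rabs (fst (t * RtoC s)%C) <= Rabs (fst t).
Proof.
  intro Hs. destruct t as [a b]; simpl. replace (a * s - b * 0) with (a * s) by ring.
  rewrite Rabs_mult. pose proof (Rabs_pos a). assert (Rabs s <= 1) by (apply Rabs_le; lra). nra.
Qed.

Lemma Cmod_cexp_le_scale t s : -1 <= s <= 1 -> Cmod (cexp (t * RtoC s)) <= scale t.
Proof.
  intro Hs. eapply Rle_trans; [apply Cmod_cexp_le, Rabs_fst_mul_RtoC, Hs | apply scale_ge].
Qed.

Lemma Cmod_ccosh_le_scale t s : -1 <= s <= 1 -> Cmod (ccosh (t * RtoC s)) <= scale t.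
Proof.
  intro Hs. eapply Rle_trans; [apply Cmod_ccosh_le, Rabs_fst_mul_RtoC, Hs | apply scale_ge].
Qed.

Lemma Cmod_csinh_le_scale t s : -1 <= s <= 1 -> Cmod (csinh (t * RtoC s)) <= scale t.
Proof.
  intro Hs. eapply Rle_trans; [apply Cmod_csinh_le, Rabs_fst_mul_RtoC, Hs | apply scale_ge].
Qed.

Lemma cexp_mul_RtoC a b s :
  cexp ((a, b) * RtoC s) = (exp (a * s) * cos (b * s), exp (a * s) * sin (b * s)).
Proof.
  unfold cexp, Re, Im; simpl.
  replace (a * s - b * 0) with (a * s) by ring. replace (a * 0 + b * s) with (b * s) by ring.
  reflexivity.
Qed.

Lemma cexp_lipschitz t s s' : -1 <= s <= 1 -> -1 <= s' <= 1 ->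
  Cmod (cexp (t * RtoC s) - cexp (t * RtoC s'))%C <= scale t * Rabs (s - s').
Proof.
  intros Hs Hs'. destruct t as [a b].
  set (K := (Rabs a + Rabs b) * exp (Rabs a)).
  assert (Hexp : forall c, -1 <= c <= 1 -> 0 < exp (a * c) <= exp (Rabs a)).
  { intros c Hc. split; [apply exp_pos | apply exp_le_exp].
    pose proof (Rabs_fst_mul_RtoC (a, b) c Hc) as H. simpl in H.
    replace (a * c - b * 0) with (a * c) in H by ring. pose proof (Rle_abs (a * c)). lra. }
  assert (Hderiv_bound : forall p q c, -1 <= c <= 1 -> Rabs p <= 1 -> Rabs q <= 1 ->
            Rabs (exp (a * c) * (a * p + b * q)) <= K).
  { intros p q c Hc Hp Hq. rewrite Rabs_mult, Rabs_pos_eq by (left; apply Hexp, Hc).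
    pose proof (Rabs_lincomb_le a b p q Hp Hq). destruct (Hexp c Hc).
    pose proof (Rabs_pos (a * p + b * q)). unfold K. rewrite Rmult_comm. apply Rmult_le_compat; lra. }
  assert (Hcos : forall c, Rabs (cos c) <= 1) by (intro; apply Rabs_le, COS_bound).
  assert (Hsin : forall c, Rabs (sin c) <= 1) by (intro; apply Rabs_le, SIN_bound).
  assert (Hsin' : forall c, Rabs (- sin c) <= 1) by (intro; rewrite Rabs_Ropp; apply Hsin).
  assert (Hre : Rabs (exp (a * s) * cos (b * s) - exp (a * s') * cos (b * s')) <= K * Rabs (s - s')).
  { apply (derivative_bound_lipschitz (fun c => exp (a * c) * cos (b * c))
      (fun c => exp (a * c) * (a * cos (b * c) + b * - sin (b * c))) (-1) 1); auto.
    intros c Hc. apply is_derive_Reals. auto_derive; [exact I | ring]. }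
  assert (Him : Rabs (exp (a * s) * sin (b * s) - exp (a * s') * sin (b * s')) <= K * Rabs (s - s')).
  { apply (derivative_bound_lipschitz (fun c => exp (a * c) * sin (b * c))
      (fun c => exp (a * c) * (a * sin (b * c) + b * cos (b * c))) (-1) 1); auto.
    intros c Hc. apply is_derive_Reals. auto_derive; [exact I | ring]. }
  rewrite !cexp_mul_RtoC. eapply Rle_trans; [apply Cmod_le_Rabs_fst_snd |]. simpl.
  pose proof (Rabs_pos (s - s')). pose proof (Rabs_pos a). pose proof (Rabs_pos b).
  pose proof (exp_pos (Rabs a)). unfold scale, K, Rminus in *; simpl. nra.
Qed.

Lemma Copp_mul_RtoC t s : (- (t * RtoC s))%C = (t * RtoC (- s))%C.
Proof. destruct t. apply injective_projections; simpl; ring. Qed.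

Lemma ccosh_lipschitz t s s' : -1 <= s <= 1 -> -1 <= s' <= 1 ->
  Cmod (ccosh (t * RtoC s) - ccosh (t * RtoC s'))%C <= scale t * Rabs (s - s').
Proof.
  intros Hs Hs'. unfold ccosh. rewrite !Copp_mul_RtoC.
  replace (_ - _)%C with (((cexp (t * RtoC s) - cexp (t * RtoC s'))
      + (cexp (t * RtoC (- s)) - cexp (t * RtoC (- s')))) / RtoC 2)%C by field.
  rewrite Cmod_div, Cmod_R, Rabs_pos_eq by (lra || (intro E; injection E; lra)).
  pose proof (Cmod_triangle (cexp (t * RtoC s) - cexp (t * RtoC s'))
                (cexp (t * RtoC (- s)) - cexp (t * RtoC (- s')))).
  pose proof (cexp_lipschitz t s s' Hs Hs').
  pose proof (cexp_lipschitz t (- s) (- s') ltac:(lra) ltac:(lra)).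
  replace (- s - - s') with (- (s - s')) in H1 by ring. rewrite Rabs_Ropp in H1. lra.
Qed.

Lemma csinh_lipschitz t s s' : -1 <= s <= 1 -> -1 <= s' <= 1 ->
  Cmod (csinh (t * RtoC s) - csinh (t * RtoC s'))%C <= scale t * Rabs (s - s').
Proof.
  intros Hs Hs'. unfold csinh. rewrite !Copp_mul_RtoC.
  replace (_ - _)%C with (((cexp (t * RtoC s) - cexp (t * RtoC s'))
      - (cexp (t * RtoC (- s)) - cexp (t * RtoC (- s')))) / RtoC 2)%C by field.
  rewrite Cmod_div, Cmod_R, Rabs_pos_eq by (lra || (intro E; injection E; lra)).
  pose proof (Cmod_sub_le (cexp (t * RtoC s) - cexp (t * RtoC s'))
                (cexp (t * RtoC (- s)) - cexp (t * RtoC (- s')))).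
  pose proof (cexp_lipschitz t s s' Hs Hs').
  pose proof (cexp_lipschitz t (- s) (- s') ltac:(lra) ltac:(lra)).
  replace (- s - - s') with (- (s - s')) in H1 by ring. rewrite Rabs_Ropp in H1. lra.
Qed.

Lemma sgn_S k : sgn (S k) = (- sgn k)%C.
Proof. unfold sgn. simpl. apply injective_projections; simpl; ring. Qed.

Lemma Cmod_sgn k : Cmod (sgn k) = 1.
Proof. unfold sgn. rewrite Cmod_R. apply pow_1_abs. Qed.

Lemma alternating_sum_SS (F : nat -> C) m :
  sum_n (fun k => sgn k * F k)%C (S (S m))
  = (sum_n (fun k => sgn k * F k)%C m + sgn m * (F (S (S m)) - F (S m)))%C.
Proof.
  rewrite !sum_Sn, !sgn_S. unfold plus; simpl. ring.
Qed.

(* Pairing consecutive terms, the alternating sum is controlled by the total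
   variation of [F] rather than by the number of terms. *)
Lemma alternating_sum_le (F : nat -> C) (nu : nat -> R) K n :
  (forall k, (k <= n)%nat -> Cmod (F k) <= K) ->
  (forall k, (k < n)%nat -> Cmod (F (S k) - F k)%C <= K * (nu (S k) - nu k)) ->
  (forall k, (k < n)%nat -> nu k <= nu (S k)) ->
  Cmod (sum_n (fun k => sgn k * F k)%C n) <= K + K * (nu n - nu O).
Proof.
  intros Hbound Hstep Hmono.
  assert (K0 : 0 <= K) by (pose proof (Cmod_ge_0 (F O)); pose proof (Hbound O ltac:(lia)); lra).
  set (P m := Cmod (sum_n (fun k => sgn k * F k)%C m) <= K + K * (nu m - nu O)).
  assert (HP0 : P O).
  { unfold P. rewrite sum_O, Cmod_mult, Cmod_sgn. pose proof (Hbound O ltac:(lia)). lra. }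
  enough (Hpair : forall m, (S m <= n)%nat -> P m /\ P (S m)).
  { destruct n as [| n']; [exact HP0 | apply Hpair; lia]. }
  induction m as [| m IH]; intro Hm.
  - split; [exact HP0 |]. unfold P.
    rewrite sum_Sn, sum_O, sgn_S. unfold plus; simpl.
    replace (sgn 0 * F O + - sgn 0 * F 1%nat)%C with (- (F 1%nat - F O))%C
      by (unfold sgn; simpl; ring).
    rewrite Cmod_opp. pose proof (Hstep O ltac:(lia)). pose proof (Hmono O ltac:(lia)). nra.
  - destruct (IH ltac:(lia)) as [HPm HPm1]. split; [exact HPm1 |]. unfold P.
    rewrite alternating_sum_SS. eapply Rle_trans; [apply Cmod_triangle |].
    rewrite Cmod_mult, Cmod_sgn.
    unfold P in HPm. pose proof (Hstep (S m) ltac:(lia)). pose proof (Hmono m ltac:(lia)). nra.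
Qed.

Lemma muz_range lam mu k : admissible lam mu -> (k <= lam)%nat -> 0 <= muz mu k <= 1.
Proof. intros [Hrange _] Hk. destruct k; simpl; [lra | apply Hrange; lia]. Qed.

Lemma muz_le_S lam mu k : admissible lam mu -> (k < lam)%nat -> muz mu k <= muz mu (S k).
Proof.
  intros [Hrange Hmono] Hk. destruct k; simpl.
  - pose proof (Hrange 1%nat ltac:(lia)). lra.
  - apply Hmono; lia.
Qed.

Lemma alternating_sum_admissible_le (f : R -> C) K lam mu : admissible lam mu ->
  (forall s, 0 <= s <= 1 -> Cmod (f s) <= K) ->
  (forall s s', 0 <= s <= 1 -> 0 <= s' <= 1 -> Cmod (f s - f s')%C <= K * Rabs (s - s')) ->
  Cmod (sum_n (fun k => sgn k * f (muz mu k))%C lam) <= 2 * K.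
Proof.
  intros Hadm Hbound Hlip.
  eapply Rle_trans; [apply (alternating_sum_le (fun k => f (muz mu k)) (muz mu) K lam) |].
  - intros k Hk. apply Hbound, (muz_range lam), Hk; exact Hadm.
  - intros k Hk. pose proof (muz_le_S lam mu k Hadm Hk).
    rewrite <- (Rabs_pos_eq (muz mu (S k) - muz mu k)) by lra.
    apply Hlip; apply (muz_range lam); auto; lia.
  - intros k Hk. apply (muz_le_S lam); auto.
  - pose proof (muz_range lam mu lam Hadm (le_n lam)).
    pose proof (Cmod_ge_0 (f 0)). pose proof (Hbound 0 ltac:(lra)). simpl. nra.
Qed.

Lemma Cmod_sum_n_le_const (F : nat -> C) c n :
  (forall k, (k <= n)%nat -> Cmod (F k) <= c) -> Cmod (sum_n F n) <= INR (S n) * c.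
Proof.
  induction n as [| n IH]; intro H.
  - rewrite sum_O, Rmult_1_l. apply H; lia.
  - rewrite sum_Sn, S_INR. eapply Rle_trans; [apply Cmod_triangle |].
    pose proof (IH (fun k Hk => H k ltac:(lia))). pose proof (H (S n) ltac:(lia)). lra.
Qed.

Lemma Cmod_sum_n_le_telescope (F : nat -> C) (nu : nat -> R) c n :
  (forall k, (k <= n)%nat -> Cmod (F k) <= c * (nu (S k) - nu k)) ->
  Cmod (sum_n F n) <= c * (nu (S n) - nu O).
Proof.
  induction n as [| n IH]; intro H.
  - rewrite sum_O. apply H; lia.
  - rewrite sum_Sn. eapply Rle_trans; [apply Cmod_triangle |].
    pose proof (IH (fun k Hk => H k ltac:(lia))). pose proof (H (S n) ltac:(lia)). lra.
Qed.

Lemma cexp_eq_RtoC_square_one z e : cexp z = RtoC e -> e * e = 1 ->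
  fst z = 0 /\ exists k : Z, snd z = IZR k * PI.
Proof.
  intros Hz He. destruct z as [a b]. unfold cexp, Re, Im, RtoC in Hz; simpl in Hz |- *.
  injection Hz as Hre Him. pose proof (exp_pos a) as Hpos.
  assert (Hsin : sin b = 0) by (apply Rmult_integral in Him; destruct Him; lra).
  assert (Hexp : exp a = 1).
  { pose proof (sin2_cos2 b) as Hpyth. rewrite Hsin in Hpyth. unfold Rsqr in Hpyth. nra. }
  split; [rewrite <- exp_0 in Hexp; apply exp_inv, Hexp | apply sin_eq_0_0, Hsin].
Qed.

Definition denom (t : C) : C := (RtoC 1 - cexp (- (RtoC 2 * t)))%C.

Lemma cexp_opp_double t : cexp (- (RtoC 2 * t)) = (cexp (- t) * cexp (- t))%C.
Proof. rewrite <- cexp_plus. f_equal. ring. Qed.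

Lemma cexp_opp_half t : cexp (- t) = (cexp (- (t / RtoC 2)) * cexp (- (t / RtoC 2)))%C.
Proof. rewrite <- cexp_plus. f_equal. field. Qed.

(* [1 - e^(-2t)] factors as [(1 - e^(-t)) (1 + e^(-t))], and [e^(-t) = +-1]
   forces [t] onto the excluded lattice [pi i Z]. *)
Lemma denom_neq0 t : Rstar t -> denom t <> 0%C.
Proof.
  intros Hstar Hzero.
  assert (Hpm : forall e, cexp (- t) = RtoC e -> e * e = 1 -> False).
  { intros e He He2. destruct (cexp_eq_RtoC_square_one _ _ He He2) as [Hre [k Him]].
    apply (Hstar (- k)%Z). destruct t as [a b]; simpl in Hre, Him.
    rewrite opp_IZR. apply injective_projections; simpl; lra. }
  apply (Cmult_neq_0 (RtoC 1 - cexp (- t)) (RtoC 1 + cexp (- t))).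
  - intro H. apply (Hpm 1); [| ring]. replace (cexp (- t)) with (RtoC 1 - (RtoC 1 - cexp (- t)))%C
      by ring. rewrite H. apply injective_projections; simpl; ring.
  - intro H. apply (Hpm (-1)); [| ring]. replace (cexp (- t)) with ((RtoC 1 + cexp (- t)) - RtoC 1)%C
      by ring. rewrite H. apply injective_projections; simpl; ring.
  - rewrite <- Hzero. unfold denom. rewrite cexp_opp_double. ring.
Qed.

Lemma csinh_cexp_opp z :
  csinh z = ((RtoC 1 - cexp (- z) * cexp (- z)) / (RtoC 2 * cexp (- z)))%C.
Proof.
  pose proof (cexp_neq0 (- z)) as Hnz. unfold csinh.
  assert (Hinv : cexp z = (/ cexp (- z))%C) by (rewrite <- cexp_opp; f_equal; ring).
  rewrite Hinv. field. exact Hnz.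
Qed.

Lemma Cdiv_csinh k t : denom t <> 0%C ->
  (k / csinh t)%C = (k / denom t * (RtoC 2 * cexp (- t)))%C.
Proof.
  intro Hd. pose proof (cexp_neq0 (- t)) as Hnz.
  unfold denom in *. rewrite csinh_cexp_opp. rewrite cexp_opp_double in *.
  field. repeat split; auto; intro E; injection E; lra.
Qed.

Lemma ccoth_half t : denom t <> 0%C ->
  ccoth (t / RtoC 2) = (RtoC 1 / denom t
    * (RtoC 2 * cexp (- (t / RtoC 2)) * (RtoC 1 + cexp (- t)) * ccosh (t / RtoC 2)))%C.
Proof.
  intro Hd. pose proof (cexp_neq0 (- (t / RtoC 2))) as Hnz.
  unfold denom, ccoth in *. rewrite csinh_cexp_opp.
  rewrite cexp_opp_double, (cexp_opp_half t) in *.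
  set (h := cexp (- (t / RtoC 2))) in *.
  assert (Hfac : (RtoC 1 - h * h)%C <> 0%C /\ (RtoC 1 + h * h)%C <> 0%C).
  { split; intro E; apply Hd;
      [ replace (RtoC 1 - h * h * (h * h))%C with ((RtoC 1 - h * h) * (RtoC 1 + h * h))%C by ring
      | replace (RtoC 1 - h * h * (h * h))%C with ((RtoC 1 + h * h) * (RtoC 1 - h * h))%C by ring ];
      rewrite E; ring. }
  field. repeat split; try tauto; intro E; injection E; lra.
Qed.

Lemma Cmod_mult_le (a b : C) A B : Cmod a <= A -> Cmod b <= B -> Cmod (a * b)%C <= A * B.
Proof.
  intros. rewrite Cmod_mult. pose proof (Cmod_ge_0 a). pose proof (Cmod_ge_0 b).
  apply Rmult_le_compat; lra.
Qed.

Lemma Cmod_plus_le (a b : C) A B : Cmod a <= A -> Cmod b <= B -> Cmod (a + b)%C <= A + B.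
Proof. intros. pose proof (Cmod_triangle a b). lra. Qed.

Lemma Cmod_minus_le (a b : C) A B : Cmod a <= A -> Cmod b <= B -> Cmod (a - b)%C <= A + B.
Proof. intros. pose proof (Cmod_sub_le a b). lra. Qed.

Lemma Cmod_opp_le (a : C) A : Cmod a <= A -> Cmod (- a)%C <= A.
Proof. rewrite Cmod_opp. auto. Qed.

Ltac Cmod_le_tac :=
  first [ eassumption |
  lazymatch goal with
  | |- Cmod (_ - _)%C <= _ => eapply Cmod_minus_le; Cmod_le_tac
  | |- Cmod (_ + _)%C <= _ => eapply Cmod_plus_le; Cmod_le_tac
  | |- Cmod (- _)%C <= _ => eapply Cmod_opp_le; Cmod_le_tac
  | |- Cmod (_ * _)%C <= _ => eapply Cmod_mult_le; Cmod_le_tac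
  end ].

Lemma Cmod_RtoC_le x : Cmod (RtoC x) <= Rabs x.
Proof. rewrite Cmod_R. apply Rle_refl. Qed.

Lemma Cmod_RtoC_nonneg_le x : 0 <= x -> Cmod (RtoC x) <= x.
Proof. intro Hx. rewrite Cmod_R, Rabs_pos_eq by exact Hx. apply Rle_refl. Qed.

Lemma Cmod_parity_le lam : Cmod (RtoC ((1 - (-1) ^ lam) / 2)) <= 1.
Proof.
  rewrite Cmod_R. assert (Hsign : Rabs ((-1) ^ lam) <= 1) by (rewrite pow_1_abs; lra).
  apply Rabs_le_between in Hsign. apply Rabs_le. lra.
Qed.

Lemma Cdiv_2_mul (t : C) : (t / RtoC 2)%C = (t * RtoC (1 / 2))%C.
Proof. destruct t. apply injective_projections; simpl; field. Qed.

Lemma Cmod_cexp_opp_le_scale t : Cmod (cexp (- t)) <= scale t.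
Proof.
  replace (- t)%C with (t * RtoC (-1))%C
    by (destruct t; apply injective_projections; simpl; ring).
  apply Cmod_cexp_le_scale; lra.
Qed.

Lemma Cmod_cexp_opp_half_le_scale t : Cmod (cexp (- (t / RtoC 2))) <= scale t.
Proof. rewrite Cdiv_2_mul, Copp_mul_RtoC. apply Cmod_cexp_le_scale; lra. Qed.

Lemma theta_alternating_sum_le x y t lam mu : admissible lam mu ->
  Cmod (sum_n (fun k => sgn k * (RtoC x * ccosh (t * RtoC (1 - muz mu k))
                                   - RtoC y * ccosh (t * RtoC (muz mu k))))%C lam)
  <= 2 * ((Rabs x + Rabs y) * scale t).
Proof.
  intro Hadm. pose proof (Rabs_pos x). pose proof (Rabs_pos y).
  apply (alternating_sum_admissible_le
    (fun s => RtoC x * ccosh (t * RtoC (1 - s)) - RtoC y * ccosh (t * RtoC s))%C); [exact Hadm | |].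
  - intros s Hs. pose proof (Cmod_RtoC_le x). pose proof (Cmod_RtoC_le y).
    pose proof (Cmod_ccosh_le_scale t (1 - s) ltac:(lra)).
    pose proof (Cmod_ccosh_le_scale t s ltac:(lra)).
    eapply Rle_trans; [Cmod_le_tac | lra].
  - intros s s' Hs Hs'.
    replace (_ - _)%C with (RtoC x * (ccosh (t * RtoC (1 - s)) - ccosh (t * RtoC (1 - s')))
                          - RtoC y * (ccosh (t * RtoC s) - ccosh (t * RtoC s')))%C by ring.
    pose proof (Cmod_RtoC_le x). pose proof (Cmod_RtoC_le y).
    pose proof (ccosh_lipschitz t (1 - s) (1 - s') ltac:(lra) ltac:(lra)) as Hlip1.
    pose proof (ccosh_lipschitz t s s' ltac:(lra) ltac:(lra)).
    replace (1 - s - (1 - s')) with (- (s - s')) in Hlip1 by ring. rewrite Rabs_Ropp in Hlip1.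
    cbv beta. eapply Rle_trans; [Cmod_le_tac | nra].
Qed.

Lemma theta_le g lam x y mu t : Rstar t -> admissible lam mu ->
  Cmod (theta g lam x y mu t)
  <= Cmod (RtoC (sqrt 2 * g) / denom t)%C * ((Rabs x + Rabs y) * (20 * scale t ^ 3)).
Proof.
  intros Hstar Hadm. pose proof (denom_neq0 t Hstar) as Hd.
  pose proof (scale_ge t) as [L2 _]. set (L := scale t) in *.
  set (SS := sum_n (fun k => sgn k * (RtoC x * ccosh (t * RtoC (1 - muz mu k))
                                      - RtoC y * ccosh (t * RtoC (muz mu k))))%C lam).
  set (c := RtoC ((1 - (-1) ^ lam) / 2)).
  set (e := cexp (- t)). set (h := cexp (- (t / RtoC 2))).
  set (ch := ccosh t). set (ch2 := ccosh (t / RtoC 2)).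
  assert (Htheta : theta g lam x y mu t = (RtoC (sqrt 2 * g) / denom t
      * (RtoC 4 * e * (RtoC x * ch - RtoC y) * c
         - (RtoC x - RtoC y) * (RtoC 2 * h * (RtoC 1 + e) * ch2)
         + RtoC 4 * e * sgn lam * SS))%C).
  { unfold theta. fold SS c ch ch2.
    rewrite !(Cdiv_csinh _ t Hd), (ccoth_half t Hd). fold e h ch2.
    replace (RtoC (2 * sqrt 2 * g)) with (RtoC 2 * RtoC (sqrt 2 * g))%C
      by (rewrite <- RtoC_mult; f_equal; ring).
    replace (RtoC (sqrt 2 * g * (x - y))) with (RtoC (sqrt 2 * g) * (RtoC x - RtoC y))%C
      by (rewrite <- RtoC_minus, <- RtoC_mult; f_equal; ring).
    field. exact Hd. }
  rewrite Htheta, Cmod_mult. apply Rmult_le_compat_l; [apply Cmod_ge_0 |].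
  pose proof (Cmod_RtoC_le x). pose proof (Cmod_RtoC_le y).
  pose proof (Cmod_RtoC_nonneg_le 1 ltac:(lra)). pose proof (Cmod_RtoC_nonneg_le 2 ltac:(lra)).
  pose proof (Cmod_RtoC_nonneg_le 4 ltac:(lra)).
  assert (He : Cmod e <= L) by apply Cmod_cexp_opp_le_scale.
  assert (Hh : Cmod h <= L) by apply Cmod_cexp_opp_half_le_scale.
  assert (Hch : Cmod ch <= L).
  { unfold ch. rewrite <- (Cmult_1_r t). apply Cmod_ccosh_le_scale; lra. }
  assert (Hch2 : Cmod ch2 <= L).
  { unfold ch2. rewrite Cdiv_2_mul. apply Cmod_ccosh_le_scale; lra. }
  assert (Hsgn : Cmod (sgn lam) <= 1) by (rewrite Cmod_sgn; lra).
  pose proof (Cmod_parity_le lam) as Hc.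
  assert (HSS : Cmod SS <= 2 * ((Rabs x + Rabs y) * L)) by apply theta_alternating_sum_le, Hadm.
  eapply Rle_trans; [Cmod_le_tac |].
  pose proof (Rabs_pos x). pose proof (Rabs_pos y).
  assert (0 <= (L - 2) * ((Rabs x + Rabs y) * L * L)) by (apply Rmult_le_pos; nra).
  assert (0 <= (L - 1) * (Rabs y * L)) by (apply Rmult_le_pos; nra).
  simpl. nra.
Qed.

Lemma squared_alternating_sum_le g lam mu t (f : R -> C) : Rstar t -> admissible lam mu ->
  (forall s, 0 <= s <= 1 -> Cmod (f s) <= scale t) ->
  (forall s s', 0 <= s <= 1 -> 0 <= s' <= 1 ->
     Cmod (f s - f s')%C <= scale t * Rabs (s - s')) ->
  Cmod (RtoC (4 * g ^ 2) / csinh t * sum_n (fun k => sgn k * f (muz mu k))%C lam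
                                   * sum_n (fun k => sgn k * f (muz mu k))%C lam)%C
  <= Cmod (RtoC (2 * g ^ 2) / denom t)%C * (16 * scale t ^ 3).
Proof.
  intros Hstar Hadm Hbound Hlip. pose proof (denom_neq0 t Hstar) as Hd.
  pose proof (alternating_sum_admissible_le f _ lam mu Hadm Hbound Hlip) as HS.
  set (S := sum_n (fun k => sgn k * f (muz mu k))%C lam) in *.
  pose proof (scale_ge t) as [L2 _]. set (L := scale t) in *.
  rewrite (Cdiv_csinh _ t Hd).
  replace (RtoC (4 * g ^ 2)) with (RtoC 2 * RtoC (2 * g ^ 2))%C
    by (rewrite <- RtoC_mult; f_equal; ring).
  replace (RtoC 2 * RtoC (2 * g ^ 2) / denom t * (RtoC 2 * cexp (- t)) * S * S)%C
    with (RtoC (2 * g ^ 2) / denom t * (RtoC 4 * cexp (- t) * S * S))%C by (field; exact Hd).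
  rewrite Cmod_mult. apply Rmult_le_compat_l; [apply Cmod_ge_0 |].
  pose proof (Cmod_RtoC_nonneg_le 4 ltac:(lra)).
  assert (He : Cmod (cexp (- t)) <= L) by apply Cmod_cexp_opp_le_scale.
  eapply Rle_trans; [Cmod_le_tac |]. simpl. nra.
Qed.

Lemma psi_plus_le g lam mu t : Rstar t -> admissible lam mu ->
  Cmod (psi_plus g lam mu t) <= Cmod (RtoC (2 * g ^ 2) / denom t)%C * (16 * scale t ^ 3).
Proof.
  intros Hstar Hadm.
  apply (squared_alternating_sum_le g lam mu t (fun s => ccosh (t * RtoC (1 / 2 - s))));
    [exact Hstar | exact Hadm | |].
  - intros s Hs. apply Cmod_ccosh_le_scale; lra.
  - intros s s' Hs Hs'. eapply Rle_trans; [apply ccosh_lipschitz; lra |].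
    replace (1 / 2 - s - (1 / 2 - s')) with (- (s - s')) by ring. rewrite Rabs_Ropp. lra.
Qed.

Lemma psi_minus_le g lam mu t : Rstar t -> admissible lam mu ->
  Cmod (psi_minus g lam mu t) <= Cmod (RtoC (2 * g ^ 2) / denom t)%C * (16 * scale t ^ 3).
Proof.
  intros Hstar Hadm.
  apply (squared_alternating_sum_le g lam mu t (fun s => csinh (t * RtoC (1 / 2 - s))));
    [exact Hstar | exact Hadm | |].
  - intros s Hs. apply Cmod_csinh_le_scale; lra.
  - intros s s' Hs Hs'. eapply Rle_trans; [apply csinh_lipschitz; lra |].
    replace (1 / 2 - s - (1 / 2 - s')) with (- (s - s')) by ring. rewrite Rabs_Ropp. lra.
Qed.

(* Bounding the inner sum termwise by [2 L] times the increment of [mu_beta],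
   the outer sum telescopes to at most [lam * 2 L^2]. *)
Lemma xi_double_sum_le t lam mu : (1 <= lam)%nat -> admissible lam mu ->
  Cmod (sum_n (fun b => sum_n (fun a =>
          if (Nat.ltb a b && Nat.odd (b - a))%bool then
            (ccosh (t * RtoC (muz mu (S b) - 1)) - ccosh (t * RtoC (muz mu b - 1)))
            * (ccosh (t * RtoC (muz mu a)) - ccosh (t * RtoC (muz mu (S a))))
          else RtoC 0) (lam - 1)) (lam - 1))%C
  <= INR lam * (2 * scale t * scale t).
Proof.
  intros Hlam Hadm. pose proof (scale_ge t) as [L2 _].
  assert (Hlam' : S (lam - 1) = lam) by lia.
  eapply Rle_trans; [apply (Cmod_sum_n_le_telescope _ (muz mu) (INR lam * (2 * scale t * scale t))) |].
  - intros b Hb. pose proof (muz_le_S lam mu b Hadm ltac:(lia)).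
    pose proof (muz_range lam mu b Hadm ltac:(lia)).
    pose proof (muz_range lam mu (S b) Hadm ltac:(lia)).
    eapply Rle_trans; [apply (Cmod_sum_n_le_const _ (scale t * (muz mu (S b) - muz mu b) * (2 * scale t))) |].
    + intros a Ha. pose proof (muz_range lam mu a Hadm ltac:(lia)).
      pose proof (muz_range lam mu (S a) Hadm ltac:(lia)).
      destruct (Nat.ltb a b && Nat.odd (b - a))%bool.
      * apply Cmod_mult_le.
        -- eapply Rle_trans; [apply ccosh_lipschitz; lra |].
           replace (muz mu (S b) - 1 - (muz mu b - 1)) with (muz mu (S b) - muz mu b) by ring.
           rewrite Rabs_pos_eq by lra. apply Rle_refl.
        -- pose proof (Cmod_ccosh_le_scale t (muz mu a) ltac:(lra)).
           pose proof (Cmod_ccosh_le_scale t (muz mu (S a)) ltac:(lra)).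
           eapply Rle_trans; [apply Cmod_sub_le | lra].
      * rewrite Cmod_R, Rabs_R0. apply Rmult_le_pos; [apply Rmult_le_pos |]; lra.
    + rewrite Hlam'. apply Req_le. ring.
  - rewrite Hlam'. pose proof (muz_range lam mu lam Hadm (le_n lam)).
    pose proof (pos_INR lam). simpl.
    assert (0 <= INR lam * (2 * scale t * scale t)) by (apply Rmult_le_pos; nra). nra.
Qed.

Lemma xi_le g lam mu t : (1 <= lam)%nat -> Rstar t -> admissible lam mu ->
  Cmod (xi g lam mu t)
  <= Cmod (RtoC (2 * g ^ 2) / denom t)%C * (24 * scale t ^ 4) * INR lam.
Proof.
  intros Hlam Hstar Hadm. pose proof (denom_neq0 t Hstar) as Hd.
  pose proof (xi_double_sum_le t lam mu Hlam Hadm) as HS2.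
  pose proof (scale_ge t) as [L2 _]. set (L := scale t) in *.
  set (S1 := sum_n (fun k => sgn k * ccosh (t * RtoC (muz mu k)))%C lam).
  set (S2 := sum_n (fun b => sum_n _ (lam - 1)) (lam - 1)) in HS2 |- *.
  set (sh := csinh (RtoC (1 / 2) * t * RtoC (1 - muz mu lam))%C).
  set (e := cexp (- t)).
  assert (Hxi : xi g lam mu t = (RtoC (2 * g ^ 2) / denom t
      * (- (RtoC 8 * e * sh * sh * sgn lam * S1) - RtoC 4 * e * S2))%C).
  { unfold xi. fold S1 S2 sh. rewrite !(Cdiv_csinh _ t Hd). fold e.
    replace (RtoC (4 * g ^ 2)) with (RtoC 2 * RtoC (2 * g ^ 2))%C
      by (rewrite <- RtoC_mult; f_equal; ring).
    replace (RtoC (8 * g ^ 2)) with (RtoC 4 * RtoC (2 * g ^ 2))%C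
      by (rewrite <- RtoC_mult; f_equal; ring).
    field. exact Hd. }
  rewrite Hxi, Cmod_mult, Rmult_assoc. apply Rmult_le_compat_l; [apply Cmod_ge_0 |].
  pose proof (Cmod_RtoC_nonneg_le 4 ltac:(lra)). pose proof (Cmod_RtoC_nonneg_le 8 ltac:(lra)).
  assert (He : Cmod e <= L) by apply Cmod_cexp_opp_le_scale.
  assert (Hsgn : Cmod (sgn lam) <= 1) by (rewrite Cmod_sgn; lra).
  assert (Hsh : Cmod sh <= L).
  { pose proof (muz_range lam mu lam Hadm (le_n lam)). unfold sh.
    replace (RtoC (1 / 2) * t * RtoC (1 - muz mu lam))%C with (t * RtoC ((1 - muz mu lam) / 2))%C
      by (destruct t; apply injective_projections; simpl; field).
    apply Cmod_csinh_le_scale; lra. }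
  assert (HS1 : Cmod S1 <= 2 * L).
  { apply (alternating_sum_admissible_le (fun s => ccosh (t * RtoC s))); [exact Hadm | |].
    - intros s Hs. apply Cmod_ccosh_le_scale; lra.
    - intros s s' Hs Hs'. apply ccosh_lipschitz; lra. }
  eapply Rle_trans; [Cmod_le_tac |].
  assert (1 <= INR lam) by (apply (le_INR 1); lia).
  assert (0 <= (INR lam - 1) * (L * L * L * L)) by (apply Rmult_le_pos; nra).
  assert (0 <= (L - 1) * (INR lam * (L * L * L))) by (apply Rmult_le_pos; nra).
  simpl. nra.
Qed.

Lemma list_nat_upper_bound (l : list nat) : exists N, forall i, In i l -> (i <= N)%nat.
Proof.
  induction l as [| a l [N HN]]; [exists O; intros i [] |].
  exists (Nat.max a N). intros i [<- | Hi]; [lia | specialize (HN i Hi); lia].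
Qed.

(* Cover [C] by the open squares [|Re z|, |Im z| < n]. *)
Lemma compactC_bounded (K : C -> Prop) : compactC K ->
  exists N, 0 <= N /\ forall t, K t -> Rabs (fst t) <= N /\ Rabs (snd t) <= N.
Proof.
  intro HK.
  destruct (HK nat (fun n z => Rabs (fst z) < INR n /\ Rabs (snd z) < INR n)) as [l Hl].
  - intros n z [Hre Him].
    assert (Hr : 0 < Rmin (INR n - Rabs (fst z)) (INR n - Rabs (snd z))) by (apply Rmin_glb_lt; lra).
    exists (mkposreal _ Hr). intros w [Hw1 Hw2]. unfold ball in Hw1, Hw2; simpl in Hw1, Hw2.
    unfold AbsRing_ball, abs, minus, plus, opp in Hw1, Hw2; simpl in Hw1, Hw2.
    pose proof (Rmin_l (INR n - Rabs (fst z)) (INR n - Rabs (snd z))).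
    pose proof (Rmin_r (INR n - Rabs (fst z)) (INR n - Rabs (snd z))).
    pose proof (Rabs_triang_inv (fst w) (fst z)). pose proof (Rabs_triang_inv (snd w) (snd z)).
    unfold Rminus in *. split; lra.
  - intros z _. destruct (INR_unbounded (Rabs (fst z) + Rabs (snd z))) as [n Hn].
    exists n. pose proof (Rabs_pos (fst z)). pose proof (Rabs_pos (snd z)). split; lra.
  - destruct (list_nat_upper_bound l) as [N HN]. exists (INR N). split; [apply pos_INR |].
    intros t Ht. destruct (Hl t Ht) as [i [Hi [Hre Him]]].
    pose proof (le_INR _ _ (HN i Hi)). split; lra.
Qed.

Lemma scale_bounded_on_compact (K : C -> Prop) : compactC K ->
  exists B, 0 <= B /\ forall t, K t -> scale t <= B.
Proof.
  intro HK. destruct (compactC_bounded K HK) as [N [HN0 HN]].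
  exists (2 * (1 + N + N) * exp N). split; [pose proof (exp_pos N); nra |].
  intros t Ht. destruct (HN t Ht) as [Hre Him]. unfold scale.
  pose proof (exp_le_exp _ _ Hre). pose proof (exp_pos (Rabs (fst t))).
  pose proof (Rabs_pos (fst t)). pose proof (Rabs_pos (snd t)).
  apply Rmult_le_compat; lra.
Qed.

Theorem mainTheorem8 (g : R) :
  exists (C1 : R -> R -> C -> R) (C2 C3 : C -> R),
    (forall x y t, Rstar t -> 0 <= C1 x y t) /\
    (forall t, Rstar t -> 0 <= C2 t) /\
    (forall t, Rstar t -> 0 <= C3 t) /\
    (forall (K : C -> Prop) (M : R), compactC K -> (forall t, K t -> Rstar t) ->
       exists B : R, forall x y t, Rabs x <= M -> Rabs y <= M -> K t ->
         C1 x y t <= B /\ C2 t <= B /\ C3 t <= B) /\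
    (forall (lam : nat) (mu : nat -> R) (x y : R) (t : C),
       (1 <= lam)%nat -> Rstar t -> admissible lam mu ->
       Cmod (theta g lam x y mu t)
         <= Cmod (RtoC (sqrt 2 * g) / (RtoC 1 - cexp (- (RtoC 2 * t))))%C * C1 x y t /\
       Cmod (psi_plus g lam mu t)
         <= Cmod (RtoC (2 * g ^ 2) / (RtoC 1 - cexp (- (RtoC 2 * t))))%C * C2 t /\
       Cmod (psi_minus g lam mu t)
         <= Cmod (RtoC (2 * g ^ 2) / (RtoC 1 - cexp (- (RtoC 2 * t))))%C * C2 t /\
       Cmod (xi g lam mu t)
         <= Cmod (RtoC (2 * g ^ 2) / (RtoC 1 - cexp (- (RtoC 2 * t))))%C * C3 t * INR lam).
Proof.
  exists (fun x y t => (Rabs x + Rabs y) * (20 * scale t ^ 3)),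
         (fun t => 16 * scale t ^ 3), (fun t => 24 * scale t ^ 4).
  assert (Hpow : forall n t, 0 <= scale t ^ n)
    by (intros n t; apply pow_le; pose proof (scale_ge t); lra).
  split; [| split; [| split; [| split]]].
  - intros x y t _. pose proof (Rabs_pos x). pose proof (Rabs_pos y).
    pose proof (Hpow 3%nat t). nra.
  - intros t _. pose proof (Hpow 3%nat t). lra.
  - intros t _. pose proof (Hpow 4%nat t). lra.
  - intros K M HK _. destruct (scale_bounded_on_compact K HK) as [B [HB0 HB]].
    exists (2 * Rabs M * (20 * B ^ 3) + 16 * B ^ 3 + 24 * B ^ 4).
    intros x y t Hx Hy Ht.
    assert (Hs : 0 <= scale t <= B) by (split; [pose proof (scale_ge t); lra | apply HB, Ht]).
    pose proof (pow_incr _ _ 3 Hs). pose proof (pow_incr _ _ 4 Hs).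
    pose proof (pow_le _ 3 HB0). pose proof (pow_le _ 4 HB0).
    pose proof (Rle_abs M). pose proof (Rabs_pos x). pose proof (Rabs_pos y).
    assert ((Rabs x + Rabs y) * (20 * scale t ^ 3) <= 2 * Rabs M * (20 * B ^ 3))
      by (apply Rmult_le_compat; nra).
    repeat split; nra.
  - intros lam mu x y t Hlam Hstar Hadm.
    split; [| split; [| split]].
    + apply theta_le; assumption.
    + apply psi_plus_le; assumption.
    + apply psi_minus_le; assumption.
    + apply xi_le; assumption.
Qed.
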